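(* Suppose that the cross-partial derivative $\nabla^2_{\psi\lambda}\ell(\psi,\lambda)$ of the assumed log-likelihood depends on the data only through a sufficient statistic $S=(S_1,\ldots,S_k)$, $1\le k\le n$, that it is additive in $S_1,\ldots,S_k$, and that $\mathbb{E}_m(S_j)=\mathbb{E}_{(\psi,\lambda)}(S_j)$ for all $j$. Then a sufficient condition for $\Psi\perp_m\Lambda$ is that $\check\imath_{\psi\lambda}(\psi,\lambda)=0$ for all $(\psi,\lambda)\in\Psi\times\Lambda$; similarly, $\check\imath_{\psi\lambda}=0$ at particular parameter values is sufficient for the corresponding local $m$-orthogonality.
   Context: Observations $Y=(Y_1,\ldots,Y_n)$ have true joint density $m$, depending on an interest parameter $\psi$. An assumed (possibly misspecified) model has joint density $\check m(y;\psi,\lambda)$, $(\psi,\lambda)\in\Psi\times\Lambda$, with log-likelihood $\ell(\psi,\lambda)=\log\check m(y;\psi,\lambda)$. $\mathbb{E}_m$ denotes expectation when $Y$ has density $m$, and $\mathbb{E}_{(\psi,\lambda)}$ denotes expectation under the assumed model. $\check\imath_{\psi\lambda}(\psi,\lambda)=\mathbb{E}_{(\psi,\lambda)}[-\nabla^2_{\psi\lambda}\ell(\psi,\lambda)]$. The notation $\Psi\perp_m\Lambda$ ($m$-orthogonality) means $\mathbb{E}_m[\nabla^2_{\psi\lambda}\ell(\psi,\lambda)]=0$ for all $(\psi,\lambda)\in\Psi\times\Lambda$; local $m$-orthogonality means this holds at particular values (e.g. $\Psi\perp_m\lambda$: at a given $\lambda$ for all $\psi$; $\psi\perp_m\Lambda$: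 at a given $\psi$ for all $\lambda$). *)

From HB Require Import structures.
From mathcomp Require Import all_boot all_order all_algebra.
From mathcomp Require Import all_classical all_reals all_analysis.
Set Implicit Arguments. Unset Strict Implicit. Unset Printing Implicit Defensive.
Import Order.TTheory GRing.Theory Num.Theory.
Import numFieldNormedType.Exports.
Local Open Scope classical_set_scope.
Local Open Scope ring_scope.

Definition xpartial {R : realType} {p q : nat}
  (f : 'rV[R]_p -> 'rV[R]_q -> R) (psi : 'rV[R]_p) (lam : 'rV[R]_q)
  : 'M[R]_(p, q) :=
  \matrix_(i < p, j < q)
    derive (fun lam' : 'rV[R]_q =>
              derive (fun psi' : 'rV[R]_p => f psi' lam') psi (delta_mx 0 i))
           lam (delta_mx 0 j).

Definition loglik {R : realType} {Y : Type} {p q : nat}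
  (mc : 'rV[R]_p -> 'rV[R]_q -> Y -> R) (y : Y) : 'rV[R]_p -> 'rV[R]_q -> R :=
  fun psi lam => ln (mc psi lam y).

Definition is_density {R : realType} {d : measure_display} {Y : measurableType d}
  (mu : {measure set Y -> \bar R}) (g : Y -> R) : Prop :=
  [/\ measurable_fun setT g, (forall y, 0 <= g y)
    & (\int[mu]_y (g y)%:E = 1)%E].

Definition Edens {R : realType} {d : measure_display} {Y : measurableType d}
  (mu : {measure set Y -> \bar R}) (g : Y -> R) (f : Y -> R) : \bar R :=
  (\int[mu]_y (f y * g y)%:E)%E.

(* S = (S_1,...,S_k) is sufficient for the assumed model on Psi x Lam
   (Fisher--Neyman factorization of the density). *)
Definition sufficient {R : realType} {Y : Type} {p q k : nat}
  (Psi : set 'rV[R]_p) (Lam : set 'rV[R]_q)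
  (mc : 'rV[R]_p -> 'rV[R]_q -> Y -> R) (S : 'I_k -> Y -> R) : Prop :=
  exists (g : 'rV[R]_p -> 'rV[R]_q -> ('I_k -> R) -> R) (h : Y -> R),
    forall psi lam y, Psi psi -> Lam lam ->
      mc psi lam y = g psi lam (fun j => S j y) * h y.

Definition icheck {R : realType} {d : measure_display} {Y : measurableType d}
  {p q : nat} (mu : {measure set Y -> \bar R})
  (mc : 'rV[R]_p -> 'rV[R]_q -> Y -> R) (psi : 'rV[R]_p) (lam : 'rV[R]_q)
  (i : 'I_p) (j : 'I_q) : \bar R :=
  Edens mu (mc psi lam) (fun y => - xpartial (loglik mc y) psi lam i j).

(* m-orthogonality at (psi, lambda): E_m[ nabla^2_{psi lambda} l(psi,lambda) ] = 0,
   the true density being m_psi. *)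
Definition m_orth_at {R : realType} {d : measure_display} {Y : measurableType d}
  {p q : nat} (mu : {measure set Y -> \bar R}) (m : 'rV[R]_p -> Y -> R)
  (mc : 'rV[R]_p -> 'rV[R]_q -> Y -> R) (psi : 'rV[R]_p) (lam : 'rV[R]_q) : Prop :=
  forall i j, Edens mu (m psi) (fun y => xpartial (loglik mc y) psi lam i j) = 0%E.

(* The cross-partial derivative is an affine function of the statistics S_j,
   so its expectation under any density depends only on the moments E(S_j).
   These moments agree under m and under the assumed model, hence
   E_m[nabla^2 l] = E_(psi,lambda)[nabla^2 l] = - icheck, which vanishes. *)
From HB Require Import structures.
From mathcomp Require Import all_boot all_order all_algebra.
From mathcomp Require Import all_classical all_reals all_analysis.
From mathcomp Require Import measurable_realfun ring.
Import Order.TTheory GRing.Theory Num.Theory.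
Import numFieldNormedType.Exports.
Local Open Scope classical_set_scope.
Local Open Scope ring_scope.

Section DensityExpectation.
Variables (R : realType) (d : measure_display) (Y : measurableType d).
Variable (mu : {measure set Y -> \bar R}).

Lemma integrable_density (g : Y -> R) :
  is_density mu g -> mu.-integrable setT (fun y => (g y)%:E).
Proof.
case=> mg g0 g1; apply/integrableP; split; first exact/measurable_EFinP.
under eq_integral do rewrite gee0_abs ?lee_fin//.
by rewrite g1 ltry.
Qed.

Lemma eq_Edens (g : Y -> R) {f f' : Y -> R} : f =1 f' -> Edens mu g f = Edens mu g f'.
Proof. by move=> ff'; apply: eq_integral => y _; rewrite ff'. Qed.

Variables (k : nat) (S : 'I_k -> Y -> R).

Definition affine_stat (c : R) (e : 'I_k -> R) (y : Y) : R :=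
  c + \sum_(j < k) S j y * e j.

Lemma affine_statN (c : R) (e : 'I_k -> R) :
  affine_stat (- c) (fun j => - e j) =1 (fun y => - affine_stat c e y).
Proof.
move=> y; rewrite /affine_stat opprD -sumrN.
by congr (_ + _); apply: eq_bigr => j _; rewrite mulrN.
Qed.

Section FixedDensity.
Variable (g : Y -> R).
Hypothesis (g_dens : is_density mu g).
Hypothesis (Sg_int : forall j, mu.-integrable setT (fun y => (S j y * g y)%:E)).

Lemma Edens_affine_stat (c : R) (e : 'I_k -> R) :
  Edens mu g (affine_stat c e) =
  (c + \sum_(j < k) e j * fine (Edens mu g (S j)))%:E.
Proof.
have eSg_int j : mu.-integrable setT (fun y => (e j)%:E * (S j y * g y)%:E)%E.
  exact: integrableZl.
rewrite /Edens (eq_integral (fun y =>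
    (c%:E * (g y)%:E) + \sum_(j < k) ((e j)%:E * (S j y * g y)%:E))%E); last first.
  move=> y _; rewrite sumEFin -!EFinM -EFinD mulrDl big_distrl /=.
  by congr (_ + _)%:E; apply: eq_bigr => j _; ring.
rewrite integralD//; last 2 first.
- exact/integrableZl/integrable_density.
- exact: integrable_sum.
rewrite integralZl//; last exact: integrable_density.
rewrite integral_sum//; case: g_dens => _ _ ->.
rewrite mule1 EFinD -sumEFin; congr (_ + _)%E; apply: eq_bigr => j _.
by rewrite integralZl// EFinM fineK//; exact: integrable_fin_num.
Qed.

Lemma Edens_affine_statN (c : R) (e : 'I_k -> R) :
  Edens mu g (fun y => - affine_stat c e y) = (- Edens mu g (affine_stat c e))%E.
Proof.
rewrite -(eq_Edens g (affine_statN c e)) !Edens_affine_stat.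
by rewrite -EFinN opprD -sumrN; congr (_ + _)%:E; apply: eq_bigr => j _; rewrite mulNr.
Qed.

End FixedDensity.

Lemma Edens_affine_stat_eq_moments (g1 g2 : Y -> R) (c : R) (e : 'I_k -> R) :
  is_density mu g1 -> is_density mu g2 ->
  (forall j, mu.-integrable setT (fun y => (S j y * g1 y)%:E)) ->
  (forall j, mu.-integrable setT (fun y => (S j y * g2 y)%:E)) ->
  (forall j, Edens mu g1 (S j) = Edens mu g2 (S j)) ->
  Edens mu g1 (affine_stat c e) = Edens mu g2 (affine_stat c e).
Proof.
move=> g1_dens g2_dens Sg1_int Sg2_int moments.
rewrite !Edens_affine_stat//; congr (_ + _)%:E.
by apply: eq_bigr => j _; rewrite moments.
Qed.

End DensityExpectation.

Arguments eq_Edens {R d Y} mu g {f f'}.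
Arguments affine_stat {R d Y k} S c e y.

Lemma mxE_scale_sum (R : pzRingType) (p q k : nat) (a : 'M[R]_(p, q))
    (s : 'I_k -> R) (b : 'I_k -> 'M[R]_(p, q)) i j :
  (a + \sum_(l < k) s l *: b l) i j = a i j + \sum_(l < k) s l * b l i j.
Proof.
by rewrite !mxE summxE; congr (_ + _); apply: eq_bigr => l _; rewrite !mxE.
Qed.

Theorem corollary1 (R : realType) (d : measure_display) (Y : measurableType d)
  (mu : {measure set Y -> \bar R}) (p q k : nat)
  (Psi : set 'rV[R]_p) (Lam : set 'rV[R]_q)
  (m : 'rV[R]_p -> Y -> R) (mc : 'rV[R]_p -> 'rV[R]_q -> Y -> R)
  (S : 'I_k -> Y -> R) :
  (0 < k)%N ->
  (forall psi, Psi psi -> is_density mu (m psi)) ->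
  (forall psi lam, Psi psi -> Lam lam -> is_density mu (mc psi lam)) ->
  sufficient Psi Lam mc S ->
  (exists (a : 'rV[R]_p -> 'rV[R]_q -> 'M[R]_(p, q))
          (b : 'I_k -> 'rV[R]_p -> 'rV[R]_q -> 'M[R]_(p, q)),
     forall psi lam y, Psi psi -> Lam lam ->
       xpartial (loglik mc y) psi lam = a psi lam + \sum_(j < k) S j y *: b j psi lam) ->
  (forall psi lam (j : 'I_k), Psi psi -> Lam lam ->
     mu.-integrable setT (fun y => (S j y * m psi y)%:E) /\
     mu.-integrable setT (fun y => (S j y * mc psi lam y)%:E)) ->
  (forall psi lam (j : 'I_k), Psi psi -> Lam lam ->
     Edens mu (m psi) (S j) = Edens mu (mc psi lam) (S j)) ->
  forall A : set ('rV[R]_p * 'rV[R]_q), A `<=` Psi `*` Lam ->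
    (forall x, A x -> forall i j, icheck mu mc x.1 x.2 i j = 0%E) ->
    forall x, A x -> m_orth_at mu m mc x.1 x.2.
Proof.
move=> _ m_dens mc_dens _ [a [b xpartial_affine]] S_int moments A sA icheck0.
move=> [psi lam] Ax i j /=; have [/= Psi_psi Lam_lam] := sA _ Ax.
have m_psi_dens := m_dens _ Psi_psi.
have mc_psi_lam_dens := mc_dens _ _ Psi_psi Lam_lam.
have Sm_int l := (S_int psi lam l Psi_psi Lam_lam).1.
have Smc_int l := (S_int psi lam l Psi_psi Lam_lam).2.
have xpartialE y : xpartial (loglik mc y) psi lam i j =
    affine_stat S (a psi lam i j) (fun l => b l psi lam i j) y.
  by rewrite xpartial_affine// mxE_scale_sum.
have Emc0 : Edens mu (mc psi lam) (fun y => xpartial (loglik mc y) psi lam i j) = 0%E.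
  apply: oppe_inj; rewrite oppe0 -(icheck0 _ Ax i j) /icheck /=.
  rewrite (eq_Edens mu _ xpartialE) -Edens_affine_statN//.
  by apply: eq_Edens => y; rewrite xpartialE.
rewrite (eq_Edens mu _ xpartialE) -Emc0 (eq_Edens mu _ xpartialE).
by apply: Edens_affine_stat_eq_moments => // l; exact: moments.
Qed.
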